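(* Let $R$ be an associative ring with identity $1$ and an involution $*$, let $p,q\in R$ be projections, and put $\overline{p}=1-p$, $\overline{q}=1-q$. If $p\overline{q}$ and $\overline{p}q$ are both MP invertible, then $p-q$ is MP invertible and $$(p-q)^{\dagger}=\overline{q}(p\overline{q}p)^{\dagger}-q(\overline{p}q\overline{p})^{\dagger}.$$
   Context: An involution on $R$ is a map $a\mapsto a^*$ with $(a^* )^*=a$, $(a+b)^*=a^*+b^*$, $(ab)^*=b^*a^*$. An element $a$ is MP invertible if there is $b$ with $aba=a$, $bab=b$, $(ab)^*=ab$, $(ba)^*=ba$; this $b$ is unique and written $a^{\dagger}$. A projection is an element $p$ with $p^2=p=p^*$. (Under the hypothesis, $p\overline{q}p$ and $\overline{p}q\overline{p}$ are MP invertible, so the formula makes sense.) *)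

From mathcomp Require Import all_boot all_algebra.
Set Implicit Arguments. Unset Strict Implicit. Unset Printing Implicit Defensive.
Import GRing.Theory.
Local Open Scope ring_scope.

Definition involution (R : pzRingType) (star : R -> R) : Prop :=
  [/\ forall a, star (star a) = a,
      forall a b, star (a + b) = star a + star b &
      forall a b, star (a * b) = star b * star a].

Definition is_MP_inverse (R : pzRingType) (star : R -> R) (a b : R) : Prop :=
  [/\ a * b * a = a, b * a * b = b,
      star (a * b) = a * b & star (b * a) = b * a].

Definition MP_invertible (R : pzRingType) (star : R -> R) (a : R) : Prop :=
  exists b, is_MP_inverse star a b.

Definition projection (R : pzRingType) (star : R -> R) (p : R) : Prop :=
  p * p = p /\ star p = p.

From mathcomp Require Import all_boot all_algebra.
Set Implicit Arguments. Unset Strict Implicit. Unset Printing Implicit Defensive.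
Import GRing.Theory.
Local Open Scope ring_scope.

(* Write [p - q = a - b] with [a = p(1-q)] and [b = (1-p)q].  These are
   *-orthogonal ([a^* b = 0 = a b^*]), so the MP inverse of [a - b] is the
   difference of the MP inverses of [a] and [b].  Moreover [a^+ = a^* g^+]
   for the Gram element [g = a a^* = p(1-q)p], and the factor [a^* = (1-q)p]
   reduces to [1-q] because [p g^+ = g^+]; symmetrically for [b]. *)

Section MPInverse.
Variables (R : pzRingType) (star : R -> R).
Hypothesis inv : involution star.

Lemma starK a : star (star a) = a. Proof. by case: inv. Qed.
Lemma starD a b : star (a + b) = star a + star b. Proof. by case: inv. Qed.
Lemma starM a b : star (a * b) = star b * star a. Proof. by case: inv. Qed.

Lemma star0 : star 0 = 0.
Proof. by apply: (@addrI _ (star 0)); rewrite -starD !addr0. Qed.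

Lemma starN a : star (- a) = - star a.
Proof. by apply/eqP; rewrite -addr_eq0 -starD addNr star0. Qed.

Lemma starB a b : star (a - b) = star a - star b.
Proof. by rewrite starD starN. Qed.

Lemma star1 : star 1 = 1.
Proof. by rewrite -[star 1]mulr1 -{2}[1]starK -starM mulr1 starK. Qed.

Lemma MP_inverseN a x : is_MP_inverse star a x -> is_MP_inverse star (- a) (- x).
Proof. by case=> h1 h2 h3 h4; split; rewrite ?mulrNN ?mulrN ?h1 ?h2 ?h3 ?h4. Qed.

Lemma MP_inverseE_left a x : is_MP_inverse star a x -> x = star a * star x * x.
Proof. by case=> _ h2 _ h4; rewrite -starM h4 h2. Qed.

Lemma MP_inverseE_right a x : is_MP_inverse star a x -> x = x * star x * star a.
Proof. by case=> _ h2 h3 _; rewrite -mulrA -starM h3 mulrA h2. Qed.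

Lemma MP_inverse_absorbl u a x :
  u * star a = star a -> is_MP_inverse star a x -> u * x = x.
Proof. by move=> ua hx; rewrite (MP_inverseE_left hx) !mulrA ua. Qed.

Lemma MP_inverseD_orthogonal a b x y :
  star a * b = 0 -> a * star b = 0 ->
  is_MP_inverse star a x -> is_MP_inverse star b y ->
  is_MP_inverse star (a + b) (x + y).
Proof.
move=> ab0 ab0' hx hy.
have ba0 : star b * a = 0 by rewrite -[a]starK -starM ab0 star0.
have ba0' : b * star a = 0 by rewrite -[b]starK -starM ab0' star0.
have xb : x * b = 0 by rewrite (MP_inverseE_right hx) -mulrA ab0 mulr0.
have bx : b * x = 0 by rewrite (MP_inverseE_left hx) !mulrA ba0' !mul0r.
have ya : y * a = 0 by rewrite (MP_inverseE_right hy) -mulrA ba0 mulr0.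
have ay : a * y = 0 by rewrite (MP_inverseE_left hy) !mulrA ab0' !mul0r.
have Exy : (a + b) * (x + y) = a * x + b * y.
  by rewrite mulrDl !mulrDr ay bx addr0 add0r.
have Eyx : (x + y) * (a + b) = x * a + y * b.
  by rewrite mulrDl !mulrDr xb ya addr0 add0r.
case: hx hy => hx1 hx2 hx3 hx4 [hy1 hy2 hy3 hy4]; split.
- by rewrite Exy mulrDl !mulrDr -!mulrA xb ya !mulr0 addr0 add0r !mulrA hx1 hy1.
- by rewrite Eyx mulrDl !mulrDr -!mulrA ay bx !mulr0 addr0 add0r !mulrA hx2 hy2.
- by rewrite Exy starD hx3 hy3.
- by rewrite Eyx starD hx4 hy4.
Qed.

Lemma MP_inverseB_orthogonal a b x y :
  star a * b = 0 -> a * star b = 0 ->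
  is_MP_inverse star a x -> is_MP_inverse star b y ->
  is_MP_inverse star (a - b) (x - y).
Proof.
move=> ab0 ab0' hx hy; apply: MP_inverseD_orthogonal (MP_inverseN hy) => //.
- by rewrite mulrN ab0 oppr0.
- by rewrite starN mulrN ab0' oppr0.
Qed.

Lemma MP_inverse_of_gram a c z :
  is_MP_inverse star a c -> is_MP_inverse star (a * star a) z ->
  is_MP_inverse star a (star a * z).
Proof.
move=> [c1 c2 c3 c4] [z1 z2 z3 _].
have aE : a = a * star a * star c by rewrite -mulrA -starM c4 mulrA c1.
have saE : star a = c * (a * star a) by rewrite {1}aE !starM !starK.
have gza : a * star a * z * a = a by rewrite {3}aE mulrA z1 -aE.
have zaE : star a * z * a = c * a by rewrite -[in RHS]gza {1}saE !mulrA.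
split.
- by rewrite mulrA gza.
- by rewrite -!mulrA [a * (_ * z)]mulrA [z * (_ * z)]mulrA z2.
- by rewrite mulrA z3.
- by rewrite zaE c4.
Qed.

Lemma projectionC p : projection star p -> projection star (1 - p).
Proof.
case=> pp sp; split; last by rewrite starB star1 sp.
by rewrite mulrBl mul1r mulrBr mulr1 pp subrr subr0.
Qed.

Lemma projection_gram p r : projection star p -> projection star r ->
  p * r * star (p * r) = p * r * p.
Proof. by move=> [_ sp] [rr sr]; rewrite starM sp sr mulrA -(mulrA p) rr. Qed.

End MPInverse.

Theorem lemma2p3 (R : pzRingType) (star : R -> R) (p q : R) :
  involution star -> projection star p -> projection star q ->
  MP_invertible star (p * (1 - q)) -> MP_invertible star ((1 - p) * q) ->
  MP_invertible star (p - q) /\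
  forall x y : R,
    is_MP_inverse star (p * (1 - q) * p) x ->
    is_MP_inverse star ((1 - p) * q * (1 - p)) y ->
    is_MP_inverse star (p - q) ((1 - q) * x - q * y).
Proof.
move=> inv hp hq [c hc] [d hd].
have hp' := projectionC inv hp; have hq' := projectionC inv hq.
have [[pp sp] [qq sq]] := (hp, hq); have [[pp' sp'] [qq' sq']] := (hp', hq').
set a := p * (1 - q); set b := (1 - p) * q.
have pqE : p - q = a - b by rewrite /a /b mulrBr mulr1 mulrBl mul1r opprB addrA subrK.
have saE : star a = (1 - q) * p by rewrite (starM inv) sp sq'.
have sbE : star b = q * (1 - p) by rewrite (starM inv) sp' sq.
have ab0 : star a * b = 0.
  by rewrite saE /b -mulrA [p * _]mulrA mulrBr mulr1 pp subrr mul0r mulr0.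
have ab0' : a * star b = 0.
  by rewrite sbE /a -mulrA [(1 - q) * _]mulrA mulrBl mul1r qq subrr mul0r mulr0.
split; first by exists (c - d); rewrite pqE; apply: MP_inverseB_orthogonal.
rewrite -(projection_gram inv hp hq') -(projection_gram inv hp' hq) -/a -/b.
move=> x y hx hy.
have pa : p * a = a by rewrite mulrA pp.
have pb : (1 - p) * b = b by rewrite mulrA pp'.
have px : p * x = x.
  by apply: (MP_inverse_absorbl inv _ hx); rewrite (starM inv) (starK inv) mulrA pa.
have py : (1 - p) * y = y.
  by apply: (MP_inverse_absorbl inv _ hy); rewrite (starM inv) (starK inv) mulrA pb.
rewrite pqE -px -py !mulrA -saE -sbE.
by have := MP_inverseB_orthogonal inv ab0 ab0'
  (MP_inverse_of_gram inv hc hx) (MP_inverse_of_gram inv hd hy).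
Qed.
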